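(* Let $\omega\in(0,\pi/2]$ and let $S$ be a monotone sofa with rotation angle $\omega$. Then $S$ is in standard position, $K:=\mathcal{C}(S)$ is a cap with rotation angle $\omega$, and $S=K\setminus\mathcal{N}(K)$.
   Context: For $t\in\mathbb{R}$ put $u_t=(\cos t,\sin t)$, $v_t=(-\sin t,\cos t)$; $R_t$ is counterclockwise rotation about the origin by $t$. For nonempty compact $X$, $p_X(t)=\max_{p\in X}p\cdot u_t$; $H(t,h)=\{p:p\cdot u_t\le h\}$. The hallway is $L=L_H\cup L_V$, $L_H=(-\infty,1]\times[0,1]$, $L_V=[0,1]\times(-\infty,1]$. A moving sofa is a connected, nonempty, compact $S\subset\mathbb{R}^2$ such that some translate of $S$ lies in $L_H$ and can be moved by a continuous rigid motion inside $L$ to a subset of $L_V$; its rotation angle $\omega\in(0,\pi/2]$ is the total clockwise angle rotated (fixed data of the sofa). It is in standard position if $p_S(\omega)=p_S(\pi/2)=1$. Let $H=\mathbb{R}\times[0,1]$, $V=[0,1]\times\mathbb{R}$, $P_\omega=H\cap R_\omega(V)$. For nonempty compact $X$: $L_X(t)=R_t(L)+(p_X(t)-1)u_t+(p_X(t+\pi/2)-1)v_t$, $Q_X^+(t)=H(t,p_X(t))\cap H(t+\pi/2,p_X(t+\pi/2))$, $Q_X^-(t)=\{p:p\cdot u_t<p_X(t)-1,\ p\cdot v_t<p_X(t+\pi/2)-1\}$. Monotonization of a moving sofa $S'$ with rotation angle $\omega$ in standard position: $\mathcal{M}(S')=P_\omega\cap\bigcap_{0\le t\le\omega}L_{S'}(t)$;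 a monotone sofa with rotation angle $\omega$ is a set $\mathcal{M}(S')$ for such $S'$ (it is itself a moving sofa with rotation angle $\omega$). $\mathcal{C}(S)=P_\omega\cap\bigcap_{0\le t\le\omega}Q_S^+(t)$. Fan: $F_\omega=\{(x,y):y\ge0,\ x\cos\omega+y\sin\omega\ge0\}$; niche $\mathcal{N}(K)=F_\omega\cap\bigcup_{0\le t\le\omega}Q_K^-(t)$. With $J_\omega=[0,\omega]\cup[\pi/2,\pi/2+\omega]$, a cap with rotation angle $\omega$ is a nonempty compact convex $K$ with $p_K(\omega)=p_K(\pi/2)=1$, $p_K(\pi+\omega)=p_K(3\pi/2)=0$, which is an intersection of closed half-planes $H(t,h)$ with $t\in J_\omega\cup\{\pi+\omega,3\pi/2\}$. *)

From HB Require Import structures.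
From mathcomp Require Import all_boot all_order all_algebra.
From mathcomp Require Import all_classical all_reals all_analysis.
Set Implicit Arguments. Unset Strict Implicit. Unset Printing Implicit Defensive.
Import Order.TTheory GRing.Theory Num.Theory.
Import numFieldNormedType.Exports.
Local Open Scope classical_set_scope.
Local Open Scope ring_scope.

Section Sofa.
Variable R : realType.
Local Notation pt := (R * R)%type.

Definition dot (p q : pt) : R := p.1 * q.1 + p.2 * q.2.
Definition uvec (t : R) : pt := (cos t, sin t).
Definition vvec (t : R) : pt := (- sin t, cos t).
Definition rot (t : R) (p : pt) : pt :=
  (cos t * p.1 - sin t * p.2, sin t * p.1 + cos t * p.2).
Definition padd (p q : pt) : pt := (p.1 + q.1, p.2 + q.2).
Definition pscale (a : R) (p : pt) : pt := (a * p.1, a * p.2).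

(* support function p_X(t) = max_{p in X} p . u_t (the sup, which is the max
   for nonempty compact X) *)
Definition supp (X : set pt) (t : R) : R := sup [set dot p (uvec t) | p in X].

Definition hplane (t h : R) : set pt := [set p | dot p (uvec t) <= h].

Definition LH : set pt := [set p | p.1 <= 1 /\ 0 <= p.2 <= 1].
Definition LV : set pt := [set p | 0 <= p.1 <= 1 /\ p.2 <= 1].
Definition hallway : set pt := LH `|` LV.

Definition rigid (theta c1 c2 : R) (p : pt) : pt := padd (rot theta p) (c1, c2).

Definition unit_interval : set R := [set s | 0 <= s <= 1].

(* S is a moving sofa with rotation angle omega: S is connected, nonempty,
   compact, and there is a continuous rigid motion (angle theta(s),
   translation (c1(s), c2(s)), s in [0,1]) such that at time 0 S is a
   translate of S (theta 0 = 0) lying in L_H, at every time the moved S lies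
   in L, at time 1 it lies in L_V, and the total clockwise rotation is omega
   (theta 1 = - omega). *)
Definition moving_sofa (S : set pt) (omega : R) : Prop :=
  0 < omega <= pi / 2 /\
  connected S /\ S !=set0 /\ compact S /\
  exists theta c1 c2 : R -> R,
    {within unit_interval, continuous theta} /\
    {within unit_interval, continuous c1} /\
    {within unit_interval, continuous c2} /\
    theta 0 = 0 /\
    rigid (theta 0) (c1 0) (c2 0) @` S `<=` LH /\
    (forall s, 0 <= s <= 1 -> rigid (theta s) (c1 s) (c2 s) @` S `<=` hallway) /\
    rigid (theta 1) (c1 1) (c2 1) @` S `<=` LV /\
    theta 1 = - omega.

Definition standard_position (S : set pt) (omega : R) : Prop :=
  supp S omega = 1 /\ supp S (pi / 2) = 1.

Definition Hstrip : set pt := [set p | 0 <= p.2 <= 1].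
Definition Vstrip : set pt := [set p | 0 <= p.1 <= 1].
Definition Pomega (omega : R) : set pt := Hstrip `&` (rot omega @` Vstrip).

Definition LX (X : set pt) (t : R) : set pt :=
  [set padd (padd (rot t q) (pscale (supp X t - 1) (uvec t)))
            (pscale (supp X (t + pi / 2) - 1) (vvec t)) | q in hallway].

Definition QXplus (X : set pt) (t : R) : set pt :=
  hplane t (supp X t) `&` hplane (t + pi / 2) (supp X (t + pi / 2)).

Definition QXminus (X : set pt) (t : R) : set pt :=
  [set p | dot p (uvec t) < supp X t - 1 /\ dot p (vvec t) < supp X (t + pi / 2) - 1].

Definition monotonization (omega : R) (S' : set pt) : set pt :=
  Pomega omega `&` [set p | forall t, 0 <= t <= omega -> LX S' t p].

Definition monotone_sofa (S : set pt) (omega : R) : Prop :=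
  exists S', moving_sofa S' omega /\ standard_position S' omega /\
             S = monotonization omega S'.

Definition Cset (omega : R) (S : set pt) : set pt :=
  Pomega omega `&` [set p | forall t, 0 <= t <= omega -> QXplus S t p].

Definition fan (omega : R) : set pt :=
  [set p | 0 <= p.2 /\ 0 <= p.1 * cos omega + p.2 * sin omega].

Definition niche (omega : R) (K : set pt) : set pt :=
  fan omega `&` [set p | exists t, 0 <= t <= omega /\ QXminus K t p].

Definition Jomega (omega t : R) : Prop :=
  (0 <= t <= omega) \/ (pi / 2 <= t <= pi / 2 + omega).

Definition convex_pts (K : set pt) : Prop :=
  forall p q, K p -> K q -> forall l : R, 0 <= l <= 1 ->
    K (padd (pscale (1 - l) p) (pscale l q)).

Definition cap (K : set pt) (omega : R) : Prop :=
  K !=set0 /\ compact K /\ convex_pts K /\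
  supp K omega = 1 /\ supp K (pi / 2) = 1 /\
  supp K (pi + omega) = 0 /\ supp K (3 * pi / 2) = 0 /\
  exists A : set (R * R),
    (forall th, A th -> Jomega omega th.1 \/ th.1 = pi + omega \/ th.1 = 3 * pi / 2) /\
    K = [set p | forall th, A th -> hplane th.1 th.2 p].

End Sofa.

(* The sofa S' lies in P_omega, since it starts in L_H, ends in L_V and is in standard
   position; and it lies in every L_{S'}(t), 0 <= t <= omega, by the intermediate value
   theorem applied to its rotation angle. Since L_X(t) = Q+_X(t) \ Q-_X(t), the
   monotonization M is squeezed between S' and C(S'), and every set so squeezed has the
   same support values as S' at all angles t and t + pi/2 with t in [0, omega]. Hence M
   is in standard position, C(M) = C(S'), and M = C(S') \ N(S') = C(M) \ N(C(M)),
   because C(S') lies in the fan and niches only depend on those support values.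
   Finally C(S') is an intersection of half-planes with normal angles in J_omega and
   {pi + omega, 3pi/2}, it is bounded, and it contains a point on both lines y = 0 and
   p . u_omega = 0: the origin when cos omega > 0, and the projection of any point of
   S' to the x-axis when omega = pi/2. So it is a cap. *)

From Pilot Require Import Defs.
From HB Require Import structures.
From mathcomp Require Import all_boot all_order all_algebra.
From mathcomp Require Import all_classical all_reals all_analysis.
From mathcomp Require Import ring lra.
Import Order.TTheory GRing.Theory Num.Theory.
Import numFieldNormedType.Exports.
Local Open Scope classical_set_scope.
Local Open Scope ring_scope.

Section MonotoneSofa.
Context {R : realType}.
Local Notation pt := (R * R)%type.
Implicit Types (X Y S K : set pt) (p q : pt) (t omega : R).

Lemma continuous_dot (u : pt) : continuous (fun p : pt => dot p u).
Proof.
move=> p; apply: cvgD; apply: cvgM; by [exact: cvg_fst | exact: cvg_snd | exact: cvg_cst].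
Qed.

Lemma dot_uvecDpihalf p t : dot p (uvec (t + pi / 2)) = dot p (vvec t).
Proof. by rewrite /dot /uvec /vvec /= cosDpihalf sinDpihalf. Qed.

Lemma dot_uvec_pihalf p : dot p (uvec (pi / 2)) = p.2.
Proof. by rewrite /dot /uvec /= cos_pihalf sin_pihalf; ring. Qed.

Lemma dot_uvec_piD p t : dot p (uvec (pi + t)) = - dot p (uvec t).
Proof. by rewrite /dot /uvec /= (addrC pi t) cosDpi sinDpi; ring. Qed.

Lemma dot_uvec_3pihalf p : dot p (uvec (3 * pi / 2)) = - p.2.
Proof.
have -> : 3 * pi / 2 = pi + pi / 2 :> R by field.
by rewrite dot_uvec_piD dot_uvec_pihalf.
Qed.

Lemma dot_rot_uvec q t : dot (Defs.rot t q) (uvec t) = q.1.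
Proof. by rewrite /dot /uvec /= -[RHS]mul1r -(cos2Dsin2 t); ring. Qed.

Lemma dot_rot_vvec q t : dot (Defs.rot t q) (vvec t) = q.2.
Proof. by rewrite /dot /vvec /= -[RHS]mul1r -(cos2Dsin2 t); ring. Qed.

Lemma rot_dot p t : Defs.rot t (dot p (uvec t), dot p (vvec t)) = p.
Proof.
case: p => a b; rewrite /Defs.rot /dot /uvec /vvec /=.
by congr pair; rewrite -[RHS]mul1r -(cos2Dsin2 t); ring.
Qed.

Lemma rotN q t : Defs.rot (- t) q = (dot q (uvec t), dot q (vvec t)).
Proof. by rewrite /Defs.rot cosN sinN /dot /uvec /vvec /=; congr pair; ring. Qed.

Lemma dot_vvec_frame p w t :
  dot p (vvec t) = dot p (uvec w) * sin (w - t) + dot p (vvec w) * cos (w - t).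
Proof.
rewrite sinB cosB /dot /uvec /vvec /=.
by rewrite -[LHS]mul1r -(cos2Dsin2 w); ring.
Qed.

Lemma dot_uvec_frame p w t :
  dot p (uvec t) = dot p (uvec w) * cos (w - t) - dot p (vvec w) * sin (w - t).
Proof.
rewrite sinB cosB /dot /uvec /vvec /=.
by rewrite -[LHS]mul1r -(cos2Dsin2 w); ring.
Qed.

Lemma dot_uvec0 p : dot p (uvec 0) = p.1.
Proof. by rewrite /dot /uvec /= cos0 sin0; ring. Qed.

Lemma cos_sin_ge0 {t} : 0 <= t <= pi / 2 -> 0 <= cos t /\ 0 <= sin t.
Proof.
move=> /andP[t0 t1]; have pi0 := pi_gt0 R; split.
  by apply: cos_ge0_pihalf; apply/andP; split; lra.
by apply: sin_ge0_pi; apply/andP; split; lra.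
Qed.

Lemma supp_ub {X} t {p} : compact X -> X p -> dot p (uvec t) <= supp X t.
Proof.
move=> cX Xp; apply: sup_upper_bound; last by exists p.
apply: compact_has_sup; first by exists (dot p (uvec t)), p.
apply: continuous_compact => //; apply: continuous_subspaceT.
exact: continuous_dot.
Qed.

Lemma supp_le X t h : X !=set0 ->
  (forall p, X p -> dot p (uvec t) <= h) -> supp X t <= h.
Proof.
move=> [p Xp] Xh; apply: ge_sup; first by exists (dot p (uvec t)), p.
by move=> _ [q Xq <-]; exact: Xh.
Qed.

Lemma supp_attained {X} t : compact X -> X !=set0 ->
  exists2 p, X p & dot p (uvec t) = supp X t.
Proof.
move=> cX [p Xp].
have cXt : compact [set dot p (uvec t) | p in X].
  apply: continuous_compact => //; apply: continuous_subspaceT.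
  exact: continuous_dot.
have Xt0 : [set dot p (uvec t) | p in X] !=set0 by exists (dot p (uvec t)), p.
have := closure_sup Xt0 (compact_has_sup Xt0 cXt).2.
by rewrite -(closure_id _).1; [case=> q Xq e; exists q | exact: compact_closed].
Qed.

Lemma supp_squeeze X Y t : compact X -> X !=set0 -> X `<=` Y ->
  (forall p, Y p -> dot p (uvec t) <= supp X t) -> supp Y t = supp X t.
Proof.
move=> cX [x Xx] XY Yle; apply/le_anti/andP; split.
  by apply: supp_le => //; exists x; exact: XY.
apply: supp_le; first by exists x.
move=> p Xp; apply: ub_le_sup; last by exists p; first exact: XY.
by exists (supp X t) => _ [q Yq <-]; exact: Yle.
Qed.

Lemma supp_eq0 K t z : compact K -> K z -> dot z (uvec t) = 0 ->
  (forall p, K p -> dot p (uvec t) <= 0) -> supp K t = 0.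
Proof.
move=> cK Kz z0 Kle; apply/le_anti/andP; split; first by apply: supp_le => //; exists z.
by rewrite -z0; exact: supp_ub.
Qed.

Lemma hallway_le1 q : hallway q -> q.1 <= 1 /\ q.2 <= 1.
Proof. by case=> [[? /andP[]] | [/andP[]]]. Qed.

Lemma hallway_up (x y x' y' : R) : hallway (x, y) ->
  x <= x' <= 1 -> y <= y' <= 1 -> hallway (x', y').
Proof.
move=> + /andP[xx' x'1] /andP[yy' y'1].
case=> [[/= _ /andP[y0 _]] | [/= /andP[x0 _] _]].
  by left; split => //=; apply/andP; split; lra.
by right; split => //=; apply/andP; split; lra.
Qed.

Lemma LX_shift q t a b :
  padd (padd (Defs.rot t q) (pscale a (uvec t))) (pscale b (vvec t)) =
  Defs.rot t (q.1 + a, q.2 + b).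
Proof. by rewrite /padd /pscale /Defs.rot /uvec /vvec /=; congr pair; ring. Qed.

Lemma LX_coord X t p : LX X t p <->
  hallway (dot p (uvec t) - supp X t + 1, dot p (vvec t) - supp X (t + pi / 2) + 1).
Proof.
split.
  case=> q Lq <-; rewrite LX_shift dot_rot_uvec dot_rot_vvec /=.
  by rewrite (_ : (_, _) = q) //; case: q {Lq} => a b /=; congr pair; ring.
move=> Lp; eexists; first exact: Lp.
by rewrite LX_shift /= -[RHS](rot_dot p t); congr (Defs.rot t); congr pair; ring.
Qed.

Lemma LXE X t : LX X t = QXplus X t `\` QXminus X t.
Proof.
apply/seteqP; split=> p; rewrite LX_coord /QXplus /QXminus /hplane /hallway /LH /LV /=.
all: rewrite dot_uvecDpihalf.
  by case=> [[h1 /andP[h2 h3]] | [/andP[h1 h2] h3]]; (split; [split; lra | case; lra]).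
case=> -[h1 h2] h3.
have [h4|h4] := lerP 0 (dot p (vvec t) - supp X (t + pi / 2) + 1).
  by left; split; [lra | apply/andP; split; lra].
have [h5|h5] := lerP 0 (dot p (uvec t) - supp X t + 1).
  by right; split; [apply/andP; split; lra | lra].
by exfalso; apply: h3; split; lra.
Qed.

Lemma PomegaE omega p :
  Pomega omega p <-> 0 <= p.2 <= 1 /\ 0 <= dot p (uvec omega) <= 1.
Proof.
split=> [[Hp [q Vq qp]] | [Hp Vp]]; first by subst p; rewrite dot_rot_uvec; split.
by split=> //; exists (dot p (uvec omega), dot p (vvec omega)); [exact: Vp | exact: rot_dot].
Qed.

Lemma Pomega_sub_fan omega : Pomega omega `<=` fan omega.
Proof. by move=> p /PomegaE[/andP[p0 _] /andP[+ _]]; rewrite /dot /uvec /=. Qed.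

Lemma rigid_rotN t c1 c2 q :
  rigid (- t) c1 c2 q = (dot q (uvec t) + c1, dot q (vvec t) + c2).
Proof. by rewrite /rigid rotN. Qed.

Lemma rigid0 c1 c2 q : rigid 0 c1 c2 q = (q.1 + c1, q.2 + c2).
Proof. by rewrite /rigid /padd /Defs.rot cos0 sin0 /=; congr pair; ring. Qed.

(* The shift [c] is forced to be nonpositive because [S] reaches level [1]. *)
Lemma strip_translate {S t} c {p} : compact S -> supp S t = 1 ->
  (forall q, S q -> 0 <= dot q (uvec t) + c <= 1) -> S p ->
  0 <= dot p (uvec t) <= 1.
Proof.
move=> cS St1 Sc Sp.
have c0 : c <= 0.
  have /supp_le : forall q, S q -> dot q (uvec t) <= 1 - c.
    by move=> q /Sc /andP[_ ?]; lra.
  by move=> /(_ (ex_intro _ p Sp)); rewrite St1; lra.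
have := supp_ub t cS Sp; have /andP[? _] := Sc p Sp; rewrite St1.
by move=> ?; apply/andP; split; lra.
Qed.

Lemma moving_sofa_sub_Pomega {S omega} :
  moving_sofa S omega -> standard_position S omega -> S `<=` Pomega omega.
Proof.
move=> [_ [_ [_ [cS [th [c1 [c2 [_ [_ [_ [th0 [SH [_ [SV th1]]]]]]]]]]]]]] [Sw Spi] p Sp.
apply/PomegaE; split.
  rewrite -dot_uvec_pihalf; apply: (strip_translate (c2 0) cS Spi _ Sp) => q Sq.
  have [_] := SH _ (ex_intro2 _ _ q Sq erefl).
  by rewrite th0 rigid0 dot_uvec_pihalf.
apply: (strip_translate (c1 1) cS Sw _ Sp) => q Sq.
by have [+ _] := SV _ (ex_intro2 _ _ q Sq erefl); rewrite th1 rigid_rotN.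
Qed.

Lemma moving_sofa_sub_LX {S omega t} :
  moving_sofa S omega -> 0 <= t <= omega -> S `<=` LX S t.
Proof.
move=> [_ [_ [S0 [cS [th [c1 [c2 [cth [_ [_ [th0 [_ [SL [_ th1]]]]]]]]]]]]]] /andP[t0 tw].
have [s] : exists2 s, s \in `[(0:R), 1] & th s = - t.
  apply: IVT => //; rewrite th0 th1; apply/andP; split.
    by rewrite ge_min; apply/orP; right; lra.
  by rewrite le_max; apply/orP; left; lra.
rewrite in_itv /= => s01 ths.
have SLs q : S q -> hallway (dot q (uvec t) + c1 s, dot q (vvec t) + c2 s).
  by move=> Sq; rewrite -rigid_rotN -ths; apply: (SL s s01); exists q.
have suppt : supp S t <= 1 - c1 s.
  by apply: supp_le => // q /SLs /hallway_le1[/= ? _]; lra.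
have suppt' : supp S (t + pi / 2) <= 1 - c2 s.
  by apply: supp_le => // q /SLs /hallway_le1[_ /= ?]; rewrite dot_uvecDpihalf; lra.
move=> p Sp; apply/LX_coord; apply: hallway_up (SLs p Sp) _ _.
  by have ? := supp_ub t cS Sp; apply/andP; split; lra.
have := supp_ub (t + pi / 2) cS Sp; rewrite dot_uvecDpihalf => ?.
by apply/andP; split; lra.
Qed.

Definition supp_agree omega X Y := forall t, 0 <= t <= omega ->
  supp X t = supp Y t /\ supp X (t + pi / 2) = supp Y (t + pi / 2).

Lemma standard_position_agree {omega X Y} : 0 <= omega ->
  supp_agree omega X Y -> standard_position Y omega -> standard_position X omega.
Proof.
move=> w0 XY [Yw Ypi]; split; first by rewrite (XY omega _).1 // w0 lexx.
by have := (XY 0 _).2; rewrite add0r => ->; rewrite // lexx w0.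
Qed.

Lemma Cset_agree {omega X Y} : supp_agree omega X Y -> Cset omega X = Cset omega Y.
Proof.
move=> XY; rewrite /Cset; congr (_ `&` _); apply/seteqP.
by split=> p Hp t ht; have [eX eY] := XY t ht; move: (Hp t ht); rewrite /QXplus eX eY.
Qed.

Lemma niche_agree {omega X Y} : supp_agree omega X Y -> niche omega X = niche omega Y.
Proof.
move=> XY; rewrite /niche; congr (_ `&` _); apply/seteqP.
split=> p [t [ht Ht]]; exists t; split=> //; have [eX eY] := XY t ht.
all: by move: Ht; rewrite /QXminus eX eY.
Qed.

Lemma supp_agree_sandwich {omega X Y} : compact X -> X !=set0 ->
  X `<=` Y -> Y `<=` Cset omega X -> supp_agree omega Y X.
Proof.
move=> cX X0 XY YC t ht.
by split; apply: supp_squeeze => // p /YC[_ /(_ t ht) []].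
Qed.

Lemma sub_Cset {omega S} : compact S -> S `<=` Pomega omega -> S `<=` Cset omega S.
Proof. by move=> cS SP p Sp; split=> [|t _]; [exact: SP | split; exact: supp_ub]. Qed.

Lemma monotonizationE omega X :
  monotonization omega X = Cset omega X `\` niche omega X.
Proof.
apply/seteqP; split=> p.
  case=> Pp Lp; split.
    by split=> // t /Lp; rewrite LXE => -[].
  by case=> _ [t [/Lp + ?]]; rewrite LXE => -[].
case=> -[Pp Qp] Np; split=> // t ht; rewrite LXE; split; first exact: Qp.
by move=> Mp; apply: Np; split; [exact: Pomega_sub_fan | exists t].
Qed.

Lemma moving_sofa_sub_monotonization {S omega} : moving_sofa S omega ->
  standard_position S omega -> S `<=` monotonization omega S.
Proof.
move=> HS Hst p Sp; split; first exact: moving_sofa_sub_Pomega HS Hst p Sp.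
by move=> t ht; exact: moving_sofa_sub_LX HS ht p Sp.
Qed.

Definition hplanes (A : set pt) : set pt := [set p | forall th, A th -> hplane th.1 th.2 p].

Lemma hplane_closed t h : closed (hplane t h).
Proof.
have -> : hplane t h = (fun p : pt => dot p (uvec t)) @^-1` [set x | x <= h] by [].
by apply: preimage_closed; [move=> p _; exact: continuous_dot | exact: closed_le].
Qed.

Lemma hplanes_closed A : closed (hplanes A).
Proof.
have -> : hplanes A = \bigcap_(th in A) hplane th.1 th.2.
  by apply/seteqP; split=> p Hp th /Hp.
by apply: closed_bigI => th _; exact: hplane_closed.
Qed.

Lemma dot_combination p q u l :
  dot (padd (pscale (1 - l) p) (pscale l q)) u = (1 - l) * dot p u + l * dot q u.
Proof. by rewrite /dot /padd /pscale /=; ring. Qed.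

Lemma hplanes_convex A : convex_pts (hplanes A).
Proof.
move=> p q Hp Hq l /andP[l0 l1] th Ath; rewrite /hplane /= dot_combination.
have hp := Hp th Ath; have hq := Hq th Ath.
have l1' : 0 <= 1 - l by rewrite subr_ge0.
have := ler_wpM2l l0 hq; have := ler_wpM2l l1' hp; rewrite /hplane /=; lra.
Qed.

Definition Pomega_constraints omega : seq pt :=
  [:: (omega, 1); (pi + omega, 0); (pi / 2, 1); (3 * pi / 2, 0)].

Lemma Pomega_hplanes omega : Pomega omega = hplanes [set` Pomega_constraints omega].
Proof.
apply/seteqP; split=> p.
  move=> /PomegaE[/andP[? ?] /andP[? ?]] th /=; rewrite !inE /hplane.
  by case/or4P=> /eqP -> /=; rewrite ?dot_uvec_piD ?dot_uvec_pihalf ?dot_uvec_3pihalf; lra.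
move=> H; have /= := H (omega, 1); have /= := H (pi + omega, 0).
have /= := H (pi / 2, 1); have /= := H (3 * pi / 2, 0).
rewrite /hplane /= dot_uvec_piD dot_uvec_pihalf dot_uvec_3pihalf !inE !eqxx !orbT.
move=> /(_ isT) ? /(_ isT) ? /(_ isT) ? /(_ isT) ?.
by apply/PomegaE; split; apply/andP; split; lra.
Qed.

Definition Cset_constraints omega X : set pt :=
  [set` Pomega_constraints omega] `|`
  [set (t, supp X t) | t in [set t | 0 <= t <= omega]] `|`
  [set (t + pi / 2, supp X (t + pi / 2)) | t in [set t | 0 <= t <= omega]].

Lemma Cset_hplanes omega X : Cset omega X = hplanes (Cset_constraints omega X).
Proof.
rewrite /Cset Pomega_hplanes; apply/seteqP; split=> p.
  by case=> HP HQ th [[/HP // | [t /HQ[? _] <-]] | [t /HQ[_ ?] <-]].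
move=> H; split=> [th ?|t ht]; first by apply: H; left; left.
split; first by apply: (H (t, supp X t)); left; right; exists t.
by apply: (H (t + pi / 2, supp X (t + pi / 2))); right; exists t.
Qed.

Lemma Cset_constraints_dir omega X th : 0 <= omega ->
  Cset_constraints omega X th ->
  Jomega omega th.1 \/ th.1 = pi + omega \/ th.1 = 3 * pi / 2.
Proof.
move=> w0; have pi0 := pi_gt0 R; rewrite /Jomega.
case=> [[|[t ht <-]] | [t /andP[t0 tw] <-]] /=.
- rewrite /= !inE => /or4P[] /eqP -> /=;
    [left; left | right; left | left; right | right; right] => //.
  + by rewrite w0 lexx.
  + by apply/andP; split; lra.
- by left; left.
- by left; right; apply/andP; split; lra.
Qed.

Lemma Cset_sub_box omega X : 0 <= omega <= pi / 2 ->
  Cset omega X `<=`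
  `[- `|supp X (omega + pi / 2)|, supp X 0]%classic `*` `[(0 : R), 1]%classic.
Proof.
move=> /[dup] wI /andP[w0 _] p [/PomegaE[p01 /andP[pw0 _]] HQ].
have [cw sw] := cos_sin_ge0 wI; have sw1 := sin_le1 omega.
have [+ _] := HQ 0 (introT andP (conj (lexx 0) w0)).
have [_ +] := HQ omega (introT andP (conj w0 (lexx omega))).
rewrite /hplane /= dot_uvecDpihalf dot_uvec0 => Hv Hx.
split=> /=; rewrite in_itv //= Hx andbT.
have := dot_uvec_frame p omega 0; rewrite subr0 dot_uvec0 => ->.
set g := supp X (omega + pi / 2) in Hv *.
have := ler_wpM2r sw (le_trans Hv (ler_norm g)).
have := ler_piMr (normr_ge0 g) sw1; have := mulr_ge0 pw0 cw; lra.
Qed.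

Lemma Cset_compact omega X : 0 <= omega <= pi / 2 -> compact (Cset omega X).
Proof.
move=> wI; apply: (subclosed_compact _ _ (Cset_sub_box omega X wI)).
  by rewrite Cset_hplanes; exact: hplanes_closed.
by apply: compact_setX; exact: segment_compact.
Qed.

Lemma QXplus_proj_xaxis X t a : compact X -> X a -> 0 <= a.2 ->
  0 <= t <= pi / 2 -> QXplus X t (a.1, 0).
Proof.
move=> cX Xa a2 /cos_sin_ge0[ct st]; split; rewrite /hplane /=.
  apply: le_trans (supp_ub t cX Xa); rewrite /dot /uvec /=.
  by have := mulr_ge0 a2 st; lra.
apply: le_trans (supp_ub (t + pi / 2) cX Xa); rewrite !dot_uvecDpihalf /dot /vvec /=.
by have := mulr_ge0 a2 ct; lra.
Qed.

Lemma Cset_origin {omega S} : 0 <= omega <= pi / 2 -> 0 < cos omega ->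
  compact S -> S !=set0 -> S `<=` Pomega omega -> standard_position S omega ->
  Cset omega S 0.
Proof.
move=> wI cw cS S0 SP [Sw Spi].
have [_ sw] := cos_sin_ge0 wI; have sw1 := sin_le1 omega.
have dot0 (u : pt) : dot 0 u = 0 by rewrite /dot /= !mul0r addr0.
split; first by apply/PomegaE; rewrite dot0 /=; split; apply/andP; split; lra.
move=> t /andP[t0 tw]; move: wI => /andP[_ wpi]; rewrite /QXplus /hplane /= !dot0.
have [ct st] : 0 <= cos t /\ 0 <= sin t by apply: cos_sin_ge0; apply/andP; split; lra.
have [cwt swt] : 0 <= cos (omega - t) /\ 0 <= sin (omega - t).
  by apply: cos_sin_ge0; apply/andP; split; lra.
have [b Sb] := supp_attained omega cS S0; rewrite Sw => bw.
have [a Sa] := supp_attained (pi / 2) cS S0; rewrite Spi dot_uvec_pihalf => a2.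
have /PomegaE[/andP[b20 b21] _] := SP b Sb.
have /PomegaE[_ /andP[aw0 aw1]] := SP a Sa.
split.
  have b1 : 0 <= b.1.
    rewrite -(pmulr_lge0 _ cw); move: bw; rewrite /dot /uvec /= => bw.
    by have := ler_wpM2r sw b21; lra.
  apply: le_trans (supp_ub t cS Sb); rewrite /dot /uvec /=.
  by have := mulr_ge0 b1 ct; have := mulr_ge0 b20 st; lra.
have av : 0 <= dot a (vvec omega).
  rewrite -(pmulr_lge0 _ cw); have := dot_vvec_frame a omega 0.
  rewrite subr0 {1}/dot /vvec /= sin0 cos0 a2; have := ler_wpM2r sw aw1; lra.
apply: le_trans (supp_ub (t + pi / 2) cS Sa); rewrite dot_uvecDpihalf (dot_vvec_frame a omega).
by have := mulr_ge0 aw0 swt; have := mulr_ge0 av cwt; lra.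
Qed.

Lemma Cset_zero_point {omega S} : 0 <= omega <= pi / 2 -> compact S -> S !=set0 ->
  S `<=` Pomega omega -> standard_position S omega ->
  exists2 z, Cset omega S z & dot z (uvec omega) = 0 /\ z.2 = 0.
Proof.
move=> wI cS S0 SP Sst; have [cw0 _] := cos_sin_ge0 wI.
have [cw|cw] := eqVneq (cos omega) 0; last first.
  exists 0; first by apply: Cset_origin => //; rewrite lt_neqAle eq_sym cw.
  by rewrite /dot /= !mul0r addr0.
have [a Sa] := S0; have /PomegaE[/andP[a20 _] _] := SP a Sa.
have dotw : dot (a.1, 0) (uvec omega) = 0 by rewrite /dot /uvec /= cw; ring.
exists (a.1, 0) => //; split.
  by apply/PomegaE; rewrite dotw /=; split; apply/andP; split; lra.
move=> t /andP[t0 tw]; apply: QXplus_proj_xaxis => //.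
by move: wI => /andP[_ ?]; apply/andP; split; lra.
Qed.

Lemma Cset_cap {omega S} : 0 <= omega <= pi / 2 -> compact S -> S !=set0 ->
  S `<=` Pomega omega -> standard_position S omega -> cap (Cset omega S) omega.
Proof.
move=> /[dup] wI /andP[w0 _] cS S0 SP Sst.
have agree := supp_agree_sandwich cS S0 (sub_Cset cS SP) (@subset_refl _ _).
have [Kw Kpi] := standard_position_agree w0 agree Sst.
have cK := Cset_compact omega S wI.
have [z Kz [zw z2]] := Cset_zero_point wI cS S0 SP Sst.
have KP : Cset omega S `<=` Pomega omega by move=> p [].
split; first by exists z.
split=> //; split; first by rewrite Cset_hplanes; exact: hplanes_convex.
split=> //; split=> //; split.
  apply: supp_eq0 cK Kz _ _; first by rewrite dot_uvec_piD zw oppr0.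
  by move=> p /KP /PomegaE[_ /andP[? _]]; rewrite dot_uvec_piD; lra.
split.
  apply: supp_eq0 cK Kz _ _; first by rewrite dot_uvec_3pihalf z2 oppr0.
  by move=> p /KP /PomegaE[/andP[? _] _]; rewrite dot_uvec_3pihalf; lra.
exists (Cset_constraints omega S); split; last exact: Cset_hplanes.
by move=> th; exact: Cset_constraints_dir.
Qed.

End MonotoneSofa.

Theorem theorem3p14 (R : realType) (omega : R) (S : set (R * R)) :
  0 < omega <= pi / 2 ->
  monotone_sofa S omega ->
  standard_position S omega /\
  cap (Cset omega S) omega /\
  S = Cset omega S `\` niche omega (Cset omega S).
Proof.
move=> /andP[w0 wpi] [S' [HS [Hst ->]]].
have wI : 0 <= omega <= pi / 2 by rewrite (ltW w0) wpi.
have [_ [_ [S'0 [cS' _]]]] := HS.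
have S'P := moving_sofa_sub_Pomega HS Hst.
have MC : monotonization omega S' `<=` Cset omega S'.
  by rewrite monotonizationE => p [].
have agreeM := supp_agree_sandwich cS' S'0 (moving_sofa_sub_monotonization HS Hst) MC.
have agreeK := supp_agree_sandwich cS' S'0 (sub_Cset cS' S'P) (@subset_refl _ _).
rewrite (Cset_agree agreeM); split; first exact: standard_position_agree (ltW w0) agreeM Hst.
split; first exact: Cset_cap wI cS' S'0 S'P Hst.
by rewrite monotonizationE (niche_agree agreeK).
Qed.
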